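(* Let $x,y$ be real numbers with $y\neq 0$ such that either $x/y\ge 1$ or $x/y\le -(\sqrt2+1)^2$. Then $$\sum_{k = 1}^\infty \frac{(27xy)^k }{k^2 (x + y)^{2k} \binom{3k}k} = 6\arctan ^2 \bigg( \frac{\sqrt 3\sqrt[3]{y} }{2\sqrt[3]{x} - \sqrt[3]{y} } \bigg) - \frac{1}{2}\log ^2 \bigg( \frac{x + y}{(\sqrt[3]{x} + \sqrt[3]{y} )^3 } \bigg).$$
   Context: $\sqrt[3]{t}$ denotes the real cube root of the real number $t$ (negative for $t<0$). *)

From Stdlib Require Import Reals.
From Coquelicot Require Import Coquelicot.
Open Scope R_scope.

Definition cbrt (t : R) : R :=
  if Rlt_dec 0 t then Rpower t (1/3)
  else if Rlt_dec t 0 then - Rpower (- t) (1/3)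
  else 0.

(* k-th term of the series, k >= 1. *)
Definition series_term (x y : R) (k : nat) : R :=
  (27 * x * y) ^ k /
  ((INR k) ^ 2 * (x + y) ^ (2 * k) * Binomial.C (3 * k) k).

(* With [a_k = 1 / (k^2 C(3k, k))] and [F u = sum_k a_k u^k] the series is
   [F (27 x y / (x + y)^2)].  The Beta integral gives
   [k a_k = int_0^1 s^(k-1) (1 - s)^(2k) ds], so summing a geometric series under the
   integral, [u F'(u) = int_0^1 u (1 - s)^2 / (1 - u s (1 - s)^2) ds] for [|u| < 27/4].
   Substituting [u = 27 t^3 / (1 + t^3)^2], the denominator factors into a linear and a
   quadratic polynomial in [s], the integral is elementary, and [u'(t) F'(u)] turns out to
   be the derivative of [6 A(t)^2 - B(t)^2 / 2], where [A t = atan (sqrt 3 t / (2 - t))] and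
   [B t = ln ((1 - t + t^2) / (1 + t)^2)].  Both [F (u t)] and this closed form vanish at
   [t = 0], hence they agree; since the series converges absolutely at [|u| = 27/4], [F] is
   continuous on the closed disk and the identity reaches its boundary.  Finally
   [t = cbrt y / cbrt x]. *)

From Stdlib Require Import Reals Lra Lia Psatz Factorial.
From Coquelicot Require Import Coquelicot.
Open Scope R_scope.

(** * Convergence of the series at the radius *)

Lemma Binomial_C_pos (n k : nat) : 0 < Binomial.C n k.
Proof.
  unfold Binomial.C. apply Rdiv_lt_0_compat; [apply INR_fact_lt_0|].
  apply Rmult_lt_0_compat; apply INR_fact_lt_0.
Qed.

Lemma Binomial_C_3k_succ (k : nat) :
  Binomial.C (3 * S k) (S k) =
  Binomial.C (3 * k) k * ((3 * INR k + 3) * (3 * INR k + 2) * (3 * INR k + 1))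
  / ((INR k + 1) * (2 * INR k + 2) * (2 * INR k + 1)).
Proof.
  unfold Binomial.C.
  replace (3 * S k - S k)%nat with (S (S (2 * k))) by lia.
  replace (3 * k - k)%nat with (2 * k)%nat by lia.
  replace (3 * S k)%nat with (S (S (S (3 * k)))) by lia.
  rewrite !fact_simpl, !mult_INR, !S_INR, !mult_INR.
  simpl (INR 2); simpl (INR 3).
  assert (H1 := INR_fact_neq_0 (3 * k)).
  assert (H2 := INR_fact_neq_0 k).
  assert (H3 := INR_fact_neq_0 (2 * k)).
  assert (0 <= INR k) by apply pos_INR.
  field; repeat split; lra.
Qed.

Definition binom3_scaled (k : nat) : R := Binomial.C (3 * k) k * (4 / 27) ^ k.

Lemma binom3_scaled_pos (k : nat) : 0 < binom3_scaled k.
Proof. apply Rmult_lt_0_compat; [apply Binomial_C_pos | apply pow_lt; lra]. Qed.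

Lemma ex_series_telescoping_bound (a d : nat -> R) (c : R) :
  0 <= c -> (forall k, 0 <= a k) -> (forall k, 0 <= d k) ->
  (forall k, a k <= c * (d k - d (S k))) -> ex_series a.
Proof.
  intros Hc Ha Hd Had.
  assert (Hpartial : forall n, sum_n a n <= c * (d O - d (S n))).
  { induction n as [|n IH].
    - rewrite sum_O. apply Had.
    - rewrite sum_Sn. specialize (Had (S n)). unfold plus; simpl. lra. }
  destruct (ex_finite_lim_seq_incr (sum_n a) (c * d O)) as [l Hl].
  - intros n. rewrite sum_Sn. specialize (Ha (S n)). unfold plus; simpl. lra.
  - intros n. specialize (Hpartial n). specialize (Hd (S n)). nra.
  - exists l. exact Hl.
Qed.

Definition coef (k : nat) : R :=
  match k with O => 0 | _ => 1 / (INR k ^ 2 * Binomial.C (3 * k) k) end.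

Lemma coef_nonneg (k : nat) : 0 <= coef k.
Proof.
  destruct k as [|k]; [simpl; lra|].
  left. apply Rdiv_lt_0_compat; [lra|]. apply Rmult_lt_0_compat.
  - apply pow_lt, lt_0_INR. lia.
  - apply Binomial_C_pos.
Qed.

Definition coef_radius : R := 27 / 4.

(* [binom3_scaled k] decays like [k^(-1/2)], so both [coef k * (27/4)^k] and the
   differences of [1 / (k binom3_scaled k)] are of order [k^(-3/2)]. *)
Lemma coef_radius_telescoping (k : nat) : (1 <= k)%nat ->
  coef k * coef_radius ^ k
  <= 5 * (1 / (INR k * binom3_scaled k) - 1 / (INR (S k) * binom3_scaled (S k))).
Proof.
  intros Hk. destruct k as [|k]; [lia|].
  assert (Hb := binom3_scaled_pos (S k)).
  assert (Eterm : coef (S k) * coef_radius ^ S k = 1 / (INR (S k) ^ 2 * binom3_scaled (S k))).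
  { unfold coef, coef_radius, binom3_scaled. replace (27 / 4) with (/ (4 / 27)) by field.
    rewrite pow_inv.
    assert (0 < (4 / 27) ^ S k) by (apply pow_lt; lra).
    assert (0 < INR (S k)) by (apply lt_0_INR; lia).
    assert (HC := Binomial_C_pos (3 * S k) (S k)).
    field. repeat split; lra. }
  rewrite Eterm.
  assert (Eb : binom3_scaled (S (S k)) = binom3_scaled (S k)
    * (4 / 27 * ((3 * INR (S k) + 3) * (3 * INR (S k) + 2) * (3 * INR (S k) + 1))
       / ((INR (S k) + 1) * (2 * INR (S k) + 2) * (2 * INR (S k) + 1)))).
  { unfold binom3_scaled. rewrite Binomial_C_3k_succ. simpl pow. field. rewrite S_INR.
    assert (0 <= INR k) by apply pos_INR. lra. }
  rewrite Eb, (S_INR (S k)).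
  assert (HK : 1 <= INR (S k)) by (apply (le_INR 1); lia).
  set (K := INR (S k)) in *. set (B := binom3_scaled (S k)) in *.
  apply Rminus_le_0.
  replace (5 * (1 / (K * B) - 1 / ((K + 1) * (B * (4 / 27 * ((3 * K + 3) * (3 * K + 2)
      * (3 * K + 1)) / ((K + 1) * (2 * K + 2) * (2 * K + 1)))))) - 1 / (K ^ 2 * B))
    with ((27 * K ^ 2 + 2 * K - 4) / (K ^ 2 * (18 * K ^ 2 + 18 * K + 4) * B)).
  2: { field. repeat split; nra. }
  apply Rdiv_le_0_compat; [nra|].
  apply Rmult_lt_0_compat; [|lra]. nra.
Qed.

Lemma ex_series_coef_radius : ex_series (fun k => Rabs (coef k) * coef_radius ^ k).
Proof.
  apply ex_series_incr_1.
  apply (ex_series_telescoping_bound _ (fun k => 1 / (INR (S k) * binom3_scaled (S k))) 5);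
    [lra | | |].
  - intros k. apply Rmult_le_pos; [apply Rabs_pos | apply pow_le; unfold coef_radius; lra].
  - intros k. left. apply Rdiv_lt_0_compat; [lra|].
    apply Rmult_lt_0_compat; [apply lt_0_INR; lia | apply binom3_scaled_pos].
  - intros k. rewrite Rabs_right by (apply Rle_ge, coef_nonneg).
    apply coef_radius_telescoping. lia.
Qed.

(** * Power series on a closed disk of absolute convergence *)

Definition clamp (r z : R) : R := (Rabs (z + r) - Rabs (z - r)) / 2.

Lemma clamp_id (r z : R) : Rabs z <= r -> clamp r z = z.
Proof. unfold clamp, Rabs. repeat destruct Rcase_abs; lra. Qed.

Lemma Rabs_clamp_le (r z : R) : 0 <= r -> Rabs (clamp r z) <= r.
Proof. unfold clamp, Rabs. repeat destruct Rcase_abs; lra. Qed.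

Lemma continuity_clamp (r : R) : continuity (clamp r).
Proof.
  intros z. unfold clamp. apply continuity_pt_mult.
  - apply continuity_pt_minus;
      apply (continuity_pt_comp _ Rabs); try apply Rcontinuity_abs;
      [apply continuity_pt_plus | apply continuity_pt_minus];
      solve [apply derivable_continuous_pt, derivable_pt_id
            | apply continuity_pt_const; now intros ? ?].
  - apply continuity_pt_const. now intros ? ?.
Qed.

Section PSeries_closed_disk.

Variables (a : nat -> R) (r : R).
Hypothesis r_pos : 0 < r.
Hypothesis abs_conv : ex_series (fun n => Rabs (a n) * r ^ n).

Lemma Rabs_term_le_closed_disk (n : nat) (z : R) :
  Rabs z <= r -> Rabs (a n * z ^ n) <= Rabs (a n) * r ^ n.
Proof.
  intros Hz. rewrite Rabs_mult, <- RPow_abs.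
  apply Rmult_le_compat_l; [apply Rabs_pos|].
  apply pow_incr. split; [apply Rabs_pos | exact Hz].
Qed.

Lemma ex_series_closed_disk (z : R) : Rabs z <= r -> ex_series (fun n => a n * z ^ n).
Proof.
  intros Hz.
  apply (@ex_series_le R_AbsRing R_CompleteNormedModule _ (fun n => Rabs (a n) * r ^ n));
    [|exact abs_conv].
  intros n. apply Rabs_term_le_closed_disk, Hz.
Qed.

Lemma Un_cv_abs_series : Un_cv (sum_f_R0 (fun n => Rabs (Rabs (a n) * r ^ n)))
  (Series (fun n => Rabs (a n) * r ^ n)).
Proof.
  apply is_series_Reals. eapply is_series_ext; [|exact (Series_correct _ abs_conv)].
  intros n. symmetry. apply Rabs_right, Rle_ge, Rmult_le_pos; [apply Rabs_pos | apply pow_le; lra].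
Qed.

Lemma CV_radius_ge_closed_disk : Rbar_le r (CV_radius a).
Proof.
  apply (CV_radius_Reals_1 a (mkposreal r r_pos)).
  exists (fun n => Rabs (a n) * r ^ n), (Series (fun n => Rabs (a n) * r ^ n)).
  split; [exact Un_cv_abs_series|].
  intros n y Hy. apply Rabs_term_le_closed_disk.
  unfold Boule in Hy. rewrite Rminus_0_r in Hy. simpl in Hy. lra.
Qed.

Let clamped_term (n : nat) (z : R) : R := a n * clamp r z ^ n.

Lemma CVN_R_clamped_term : CVN_R clamped_term.
Proof.
  intros r'. exists (fun n => Rabs (a n) * r ^ n), (Series (fun n => Rabs (a n) * r ^ n)).
  split; [exact Un_cv_abs_series|].
  intros n y _. apply Rabs_term_le_closed_disk, Rabs_clamp_le. lra.
Qed.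

(* Clamping to [[-r, r]] makes the sum continuous on all of [R], which gives
   continuity of the power series up to and including the boundary of the disk. *)
Lemma continuity_PSeries_clamp : continuity (fun z => PSeries a (clamp r z)).
Proof.
  set (cv := CVN_R_CVS clamped_term CVN_R_clamped_term).
  assert (Hcont : continuity (SFL clamped_term cv)).
  { apply SFL_continuity; [exact CVN_R_clamped_term|].
    intros n z. apply continuity_pt_mult; [apply continuity_pt_const; now intros ? ?|].
    apply (continuity_pt_comp (clamp r) (fun w => w ^ n)); [apply continuity_clamp|].
    apply derivable_continuous_pt, derivable_pt_pow. }
  intros z. apply (continuity_pt_ext (SFL clamped_term cv)); [|apply Hcont].
  intros w. unfold SFL. destruct (cv w) as [l Hl]. simpl.
  eapply UL_sequence; [exact Hl|]. apply is_series_Reals, Series_correct.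
  apply ex_series_closed_disk, Rabs_clamp_le. lra.
Qed.

Lemma is_derive_PSeries_clamp (z : R) : Rabs z < r ->
  is_derive (fun v => PSeries a (clamp r v)) z (PSeries (PS_derive a) z).
Proof.
  intros Hz. apply (is_derive_ext_loc (PSeries a)).
  - assert (He : 0 < r - Rabs z) by lra.
    exists (mkposreal _ He). intros v Hv.
    change R in v. change (Rabs (v - z) < r - Rabs z) in Hv.
    assert (H := Rabs_triang (v - z) z). replace (v - z + z) with (v : R) in H by ring.
    rewrite clamp_id; [reflexivity | lra].
  - apply is_derive_PSeries.
    assert (H := CV_radius_ge_closed_disk).
    destruct (CV_radius a) as [c| |]; simpl in *; auto; lra.
Qed.

End PSeries_closed_disk.

Lemma ex_derive_continuous_R (f : R -> R) (x : R) : ex_derive f x -> continuous f x.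
Proof. apply (ex_derive_continuous (K := R_AbsRing) (V := R_NormedModule)). Qed.

Lemma continuity_pt_of_is_derive (f : R -> R) (x l : R) : is_derive f x l -> continuity_pt f x.
Proof. intros H. apply continuity_pt_filterlim, ex_derive_continuous_R. eexists. exact H. Qed.

Lemma is_RInt_derive_R (F f : R -> R) (a b : R) : a <= b ->
  (forall x, a <= x <= b -> is_derive F x (f x)) ->
  (forall x, a <= x <= b -> continuous f x) ->
  is_RInt f a b (F b - F a).
Proof.
  intros Hab HF Hf. apply (is_RInt_derive F f);
    intros x Hx; rewrite Rmin_left, Rmax_right in Hx by lra; auto.
Qed.

Lemma eq_of_is_derive_0 (f : R -> R) (a b : R) :
  (forall x, Rmin a b < x < Rmax a b -> is_derive f x 0) ->
  (forall x, Rmin a b <= x <= Rmax a b -> continuity_pt f x) -> f b = f a.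
Proof.
  intros Hf Hc. destruct (MVT_gen f a b (fun _ => 0) Hf Hc) as [c [_ Hfc]]. lra.
Qed.

Lemma is_derive_atan_div (N D : R -> R) (x dN dD : R) :
  is_derive N x dN -> is_derive D x dD -> D x <> 0 ->
  is_derive (fun y => atan (N y / D y)) x ((dN * D x - N x * dD) / (D x ^ 2 + N x ^ 2)).
Proof.
  intros HN HD HDx. evar_last.
  - exact (is_derive_comp atan (fun y => N y / D y) x _ _
             (is_derive_atan _) (is_derive_div _ _ _ _ _ HN HD HDx)).
  - assert (0 < D x ^ 2) by (apply pow2_gt_0; exact HDx).
    assert (0 <= N x ^ 2) by apply pow2_ge_0.
    unfold scal; simpl; unfold mult; simpl. unfold Rsqr. field. split; [nra | exact HDx].
Qed.

Lemma is_RInt_sum_n (f : nat -> R -> R) (I : nat -> R) (a b : R) (N : nat) :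
  (forall k, is_RInt (f k) a b (I k)) ->
  is_RInt (fun s => sum_n (fun k => f k s) N) a b (sum_n I N).
Proof.
  intros HI. induction N as [|N IH].
  - apply (is_RInt_ext (f O)); [intros s _; now rewrite sum_O|]. rewrite sum_O. apply HI.
  - apply (is_RInt_ext (fun s => plus (sum_n (fun k => f k s) N) (f (S N) s))).
    { intros s _. now rewrite sum_Sn. }
    rewrite sum_Sn. exact (is_RInt_plus _ _ _ _ _ _ IH (HI (S N))).
Qed.

Lemma is_lim_seq_RInt_uniform (f : nat -> R -> R) (g : R -> R) (I e : nat -> R) (a b c : R) :
  a <= b ->
  (forall n, is_RInt (f n) a b (I n)) -> is_RInt g a b c ->
  (forall n s, a <= s <= b -> Rabs (g s - f n s) <= e n) ->
  is_lim_seq e 0 -> is_lim_seq I c.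
Proof.
  intros Hab Hf Hg Hbound He.
  assert (Herr : forall n, Rabs (c - I n) <= (b - a) * e n).
  { intros n.
    assert (Hdiff : is_RInt (fun s => g s - f n s) a b (c - I n))
      by exact (is_RInt_minus _ _ _ _ _ _ Hg (Hf n)).
    rewrite <- (is_RInt_unique _ _ _ _ Hdiff).
    apply abs_RInt_le_const; [exact Hab | eexists; exact Hdiff | apply Hbound]. }
  apply (is_lim_seq_ext (fun n => c - (c - I n))); [intros n; ring|].
  replace (Finite c) with (Rbar_minus c 0) by (simpl; f_equal; ring).
  apply is_lim_seq_minus'; [apply is_lim_seq_const|].
  assert (Hbound0 : is_lim_seq (fun n => (b - a) * e n) 0).
  { rewrite <- (Rmult_0_r (b - a)). exact (is_lim_seq_scal_l _ _ _ He). }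
  apply (is_lim_seq_le_le (fun n => - ((b - a) * e n)) _ (fun n => (b - a) * e n)).
  - intros n. apply Rabs_le_between, Herr.
  - rewrite <- Ropp_0. exact (proj1 (is_lim_seq_opp _ _) Hbound0).
  - exact Hbound0.
Qed.

(** * The integral representation *)

Lemma is_RInt_pow_01 (m : nat) : is_RInt (fun s => s ^ m) 0 1 (/ INR (S m)).
Proof.
  assert (Hm : INR (S m) <> 0) by (apply not_0_INR; lia).
  evar_last; [apply (is_RInt_derive_R (fun s => s ^ S m / INR (S m))); [lra| |]
             | rewrite pow1; simpl; field; exact Hm].
  - intros s _. set (c := INR (S m)) in *. auto_derive; [auto|].
    (* [auto_derive] unfolds the exponent's [INR (S m)] one step *)
    change (match m with 0%nat => 1 | S _ => INR m + 1 end) with c. field. exact Hm.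
  - intros s _. apply ex_derive_continuous_R. auto_derive. auto.
Qed.

(* Integration by parts: [s^(m+1) (1 - s)^(n+1)] vanishes at both ends. *)
Lemma is_RInt_beta_parts (m n : nat) :
  is_RInt (fun s => INR (S m) * s ^ m * (1 - s) ^ S n - INR (S n) * s ^ S m * (1 - s) ^ n)
    0 1 0.
Proof.
  evar_last; [apply (is_RInt_derive_R (fun s => s ^ S m * (1 - s) ^ S n)); [lra| |] | simpl; ring].
  - intros s _. auto_derive; [auto|].
    change (match m with 0%nat => 1 | S _ => INR m + 1 end) with (INR (S m)).
    change (match n with 0%nat => 1 | S _ => INR n + 1 end) with (INR (S n)).
    replace (1 + - s) with (1 - s) by ring. simpl. ring.
  - intros s _. apply ex_derive_continuous_R. auto_derive. auto.
Qed.

Lemma is_RInt_beta (n : nat) : forall m : nat,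
  is_RInt (fun s => s ^ m * (1 - s) ^ n) 0 1
    (INR (fact m) * INR (fact n) / INR (fact (m + n + 1))).
Proof.
  induction n as [|n IH]; intros m;
    assert (Hm : INR (S m) <> 0) by (apply not_0_INR; lia).
  - apply (is_RInt_ext (fun s => s ^ m)); [intros s _; simpl; ring|].
    replace (INR (fact m) * INR (fact 0) / INR (fact (m + 0 + 1))) with (/ INR (S m)).
    { apply is_RInt_pow_01. }
    rewrite Nat.add_0_r, Nat.add_1_r, fact_simpl, mult_INR.
    assert (Hf := INR_fact_neq_0 m). simpl. field. auto.
  - apply (is_RInt_ext (fun s => / INR (S m)
      * ((INR (S m) * s ^ m * (1 - s) ^ S n - INR (S n) * s ^ S m * (1 - s) ^ n)
         + INR (S n) * (s ^ S m * (1 - s) ^ n)))).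
    { intros s _. simpl. field. exact Hm. }
    replace (INR (fact m) * INR (fact (S n)) / INR (fact (m + S n + 1)))
      with (/ INR (S m) * (0 + INR (S n)
              * (INR (fact (S m)) * INR (fact n) / INR (fact (S m + n + 1))))).
    { exact (is_RInt_scal _ _ _ _ _ (is_RInt_plus _ _ _ _ _ _
               (is_RInt_beta_parts m n) (is_RInt_scal _ _ _ _ _ (IH (S m))))). }
    replace (m + S n + 1)%nat with (S m + n + 1)%nat by lia.
    rewrite (fact_simpl m), (fact_simpl n), !mult_INR.
    assert (Hf := INR_fact_neq_0 m). assert (Hf' := INR_fact_neq_0 (S m + n + 1)).
    field. auto.
Qed.

Lemma is_RInt_coef (k : nat) :
  is_RInt (fun s => s ^ k * (1 - s) ^ (2 * k + 2)) 0 1 (INR (S k) * coef (S k)).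
Proof.
  replace (INR (S k) * coef (S k))
    with (INR (fact k) * INR (fact (2 * k + 2)) / INR (fact (k + (2 * k + 2) + 1))).
  { apply is_RInt_beta. }
  unfold coef, Binomial.C.
  replace (3 * S k - S k)%nat with (2 * k + 2)%nat by lia.
  replace (k + (2 * k + 2) + 1)%nat with (3 * S k)%nat by lia.
  rewrite (fact_simpl k), mult_INR.
  assert (H1 := INR_fact_neq_0 k). assert (H2 := INR_fact_neq_0 (2 * k + 2)).
  assert (H3 := INR_fact_neq_0 (3 * S k)). assert (H4 : INR (S k) <> 0) by (apply not_0_INR; lia).
  field. auto.
Qed.

Definition kernel (v s : R) : R := v * (1 - s) ^ 2 / (1 - v * s * (1 - s) ^ 2).

Lemma s_one_minus_s_sq_bound (s : R) : 0 <= s <= 1 -> 0 <= s * (1 - s) ^ 2 <= 4 / 27.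
Proof.
  intros Hs. split; [apply Rmult_le_pos; [lra | apply pow2_ge_0]|].
  assert (0 <= (s - 1 / 3) ^ 2 * (4 / 3 - s)) by (apply Rmult_le_pos; [apply pow2_ge_0 | lra]).
  nra.
Qed.

Lemma sum_n_kernel_geometric (v s : R) (N : nat) : v * s * (1 - s) ^ 2 <> 1 ->
  sum_n (fun k => v ^ S k * (s ^ k * (1 - s) ^ (2 * k + 2))) N
  = kernel v s * (1 - (v * s * (1 - s) ^ 2) ^ S N).
Proof.
  intros Hq. unfold kernel. induction N as [|N IH].
  - rewrite sum_O. simpl. field. lra.
  - rewrite sum_Sn, IH.
    replace ((1 - s) ^ (2 * S N + 2)) with (((1 - s) ^ 2) ^ S N * (1 - s) ^ 2)
      by (rewrite <- pow_mult, <- pow_add; f_equal; lia).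
    rewrite !Rpow_mult_distr. unfold plus. simpl. field. lra.
Qed.

Lemma Rabs_kernel_ratio_le (v s : R) : 0 <= s <= 1 ->
  Rabs (v * s * (1 - s) ^ 2) <= Rabs v * (4 / 27).
Proof.
  intros Hs. rewrite Rmult_assoc, Rabs_mult. apply Rmult_le_compat_l; [apply Rabs_pos|].
  destruct (s_one_minus_s_sq_bound s Hs). rewrite Rabs_right; lra.
Qed.

Lemma Rabs_kernel_le (v s : R) : Rabs v < coef_radius -> 0 <= s <= 1 ->
  Rabs (kernel v s) <= Rabs v / (1 - Rabs v * (4 / 27)).
Proof.
  intros Hv Hs. unfold coef_radius in Hv. unfold kernel.
  assert (Hq := Rabs_kernel_ratio_le v s Hs).
  assert (Hden : 1 - Rabs v * (4 / 27) <= Rabs (1 - v * s * (1 - s) ^ 2)).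
  { apply Rle_trans with (1 - v * s * (1 - s) ^ 2); [|apply Rle_abs].
    assert (H := Rle_abs (v * s * (1 - s) ^ 2)). lra. }
  unfold Rdiv. rewrite !Rabs_mult, Rabs_inv, (Rabs_right ((1 - s) ^ 2))
    by (apply Rle_ge, pow2_ge_0).
  assert (0 <= (1 - s) ^ 2 <= 1) by (split; [apply pow2_ge_0 | nra]).
  assert (0 <= Rabs v) by apply Rabs_pos.
  apply Rmult_le_compat; [nra | left; apply Rinv_0_lt_compat; lra | nra |].
  apply Rinv_le_contravar; lra.
Qed.

Lemma is_series_coef_kernel (v c : R) : Rabs v < coef_radius ->
  is_RInt (kernel v) 0 1 c -> is_series (fun n => INR (S n) * coef (S n) * v ^ S n) c.
Proof.
  intros Hv Hc.
  set (rho := Rabs v * (4 / 27)). set (G := Rabs v / (1 - rho)).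
  assert (Hrho : 0 <= rho < 1).
  { unfold rho, coef_radius in *. split; [apply Rmult_le_pos; [apply Rabs_pos | lra] | lra]. }
  change (is_lim_seq (sum_n (fun n => INR (S n) * coef (S n) * v ^ S n)) c).
  apply (is_lim_seq_RInt_uniform
           (fun N s => sum_n (fun k => v ^ S k * (s ^ k * (1 - s) ^ (2 * k + 2))) N)
           (kernel v) _ (fun N => G * rho ^ S N) 0 1 c); [lra | | exact Hc | |].
  - intros N. apply is_RInt_sum_n. intros k.
    replace (INR (S k) * coef (S k) * v ^ S k) with (v ^ S k * (INR (S k) * coef (S k)))
      by ring.
    exact (is_RInt_scal _ _ _ _ _ (is_RInt_coef k)).
  - intros N s Hs. assert (Hq := Rabs_kernel_ratio_le v s Hs).
    rewrite sum_n_kernel_geometric.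
    2: { intros E. rewrite E, Rabs_R1 in Hq. fold rho in Hq. lra. }
    replace (kernel v s - kernel v s * (1 - (v * s * (1 - s) ^ 2) ^ S N))
      with (kernel v s * (v * s * (1 - s) ^ 2) ^ S N) by ring.
    rewrite Rabs_mult, <- RPow_abs.
    apply Rmult_le_compat; [apply Rabs_pos | apply pow_le, Rabs_pos | |].
    + apply Rabs_kernel_le; assumption.
    + apply pow_incr. split; [apply Rabs_pos | exact Hq].
  - rewrite <- (Rmult_0_r (G * rho)).
    apply (is_lim_seq_ext (fun N => G * rho * rho ^ N)); [intros N; simpl; ring|].
    apply (is_lim_seq_scal_l _ _ 0), is_lim_seq_geom. rewrite Rabs_right; lra.
Qed.

(** * The elementary integral *)

Lemma sqrt3_mul_pow2 (y : R) : (sqrt 3 * y) ^ 2 = 3 * y ^ 2.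
Proof. rewrite Rpow_mult_distr, pow2_sqrt; lra. Qed.

Definition atan_part (t : R) : R := atan (sqrt 3 * t / (2 - t)).

Lemma is_derive_atan_part (t : R) : t < 2 ->
  is_derive atan_part t (sqrt 3 / (2 * (1 - t + t ^ 2))).
Proof.
  intros Ht. evar_last.
  - apply (is_derive_atan_div (fun y => sqrt 3 * y) (fun y => 2 - y) t (sqrt 3) (-1)).
    + auto_derive; [auto | ring].
    + auto_derive; [auto | ring].
    + lra.
  - rewrite sqrt3_mul_pow2. field. split; nra.
Qed.

Lemma atan_part_0 : atan_part 0 = 0.
Proof. unfold atan_part. rewrite Rmult_0_r, Rdiv_0_l. apply atan_0. Qed.

Lemma atan_triple_identity (t : R) : -1 < t < 1 ->
  atan ((1 + t) / (sqrt 3 * (1 - t))) - atan ((t ^ 2 - 4 * t + 1) / (sqrt 3 * (1 - t ^ 2)))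
  = 3 * atan_part t.
Proof.
  intros Ht. assert (Hs := Rlt_sqrt3_0).
  set (phi := fun t => atan ((1 + t) / (sqrt 3 * (1 - t)))
                     - atan ((t ^ 2 - 4 * t + 1) / (sqrt 3 * (1 - t ^ 2))) - 3 * atan_part t).
  assert (Hderiv : forall x, -1 < x < 1 -> is_derive phi x 0).
  { intros x Hx.
    assert (D1 : is_derive (fun y => atan ((1 + y) / (sqrt 3 * (1 - y)))) x
                   ((1 * (sqrt 3 * (1 - x)) - (1 + x) * (- sqrt 3))
                    / ((sqrt 3 * (1 - x)) ^ 2 + (1 + x) ^ 2))).
    { apply (is_derive_atan_div (fun y => 1 + y) (fun y => sqrt 3 * (1 - y)));
        [auto_derive; [auto | ring] .. | apply Rmult_integral_contrapositive; split; lra]. }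
    assert (D2 : is_derive (fun y => atan ((y ^ 2 - 4 * y + 1) / (sqrt 3 * (1 - y ^ 2)))) x
                   (((2 * x - 4) * (sqrt 3 * (1 - x ^ 2))
                     - (x ^ 2 - 4 * x + 1) * (- 2 * sqrt 3 * x))
                    / ((sqrt 3 * (1 - x ^ 2)) ^ 2 + (x ^ 2 - 4 * x + 1) ^ 2))).
    { apply (is_derive_atan_div (fun y => y ^ 2 - 4 * y + 1) (fun y => sqrt 3 * (1 - y ^ 2)));
        [auto_derive; [auto | ring] .. | apply Rmult_integral_contrapositive; split; nra]. }
    assert (D3 := is_derive_atan_part x ltac:(lra)).
    evar_last.
    - exact (is_derive_minus _ _ _ _ _ (is_derive_minus _ _ _ _ _ D1 D2)
                             (is_derive_scal _ _ 3 _ D3)).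
    - rewrite !sqrt3_mul_pow2. unfold minus, plus, opp; simpl.
      field. split; [nra|]. split; [nra|]. nra. }
  assert (Hphi : phi t = phi 0).
  { apply eq_of_is_derive_0; intros x Hx;
      [| apply (continuity_pt_of_is_derive _ _ 0)]; apply Hderiv;
      revert Hx; unfold Rmin, Rmax; destruct Rle_dec; lra. }
  unfold phi in Hphi. rewrite atan_part_0 in Hphi.
  replace ((0 ^ 2 - 4 * 0 + 1) / (sqrt 3 * (1 - 0 ^ 2))) with ((1 + 0) / (sqrt 3 * (1 - 0)))
    in Hphi by (field; lra).
  lra.
Qed.

Definition uval (t : R) : R := 27 * t ^ 3 / (1 + t ^ 3) ^ 2.

Lemma one_plus_cube_pos (t : R) : -1 < t -> 0 < 1 + t ^ 3.
Proof.
  intros Ht. replace (1 + t ^ 3) with ((1 + t) * (1 - t + t ^ 2)) by ring.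
  apply Rmult_lt_0_compat; nra.
Qed.

Definition log_part (t : R) : R := ln ((1 - t + t ^ 2) / (1 + t) ^ 2).

Definition kernel_integral (t : R) : R :=
  t * (2 * sqrt 3 * (1 + t) * atan_part t + (1 - t) * log_part t) / (1 - t ^ 3).

Section Kernel_integral.

Variable t : R.
Hypothesis t_range : -1 < t < 1.

Let b : R := t ^ 2 - 4 * t + 1.
Let K : R := sqrt 3 * ((1 - t ^ 2) / 2).
Let lin (s : R) : R := (1 + t) ^ 2 - 3 * t * s.
Let quad (s : R) : R := (3 * t * s) ^ 2 + b * (3 * t * s) + (1 - t + t ^ 2) ^ 2.

Let kernel_uval_denominator (s : R) :
  (1 + t ^ 3) ^ 2 * (1 - uval t * s * (1 - s) ^ 2) = lin s * quad s.
Proof.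
  assert (Hcube := one_plus_cube_pos t ltac:(lra)).
  unfold uval, lin, quad, b. field. lra.
Qed.

Let lin_pos (s : R) : 0 <= s <= 1 -> 0 < lin s.
Proof. intros Hs. unfold lin. destruct (Rle_lt_dec 0 t); nra. Qed.

Let quad_pos (s : R) : 0 < quad s.
Proof.
  replace (quad s) with ((3 * t * s + b / 2) ^ 2 + 3 * (1 - t ^ 2) ^ 2 / 4)
    by (unfold quad, b; field).
  assert (0 < (1 - t ^ 2) ^ 2) by (apply pow2_gt_0; nra).
  assert (0 <= (3 * t * s + b / 2) ^ 2) by apply pow2_ge_0.
  lra.
Qed.

Let kernel_uval_denominator_neq_0 (s : R) : 0 <= s <= 1 -> 1 - uval t * s * (1 - s) ^ 2 <> 0.
Proof.
  intros Hs E. assert (H := kernel_uval_denominator s). rewrite E, Rmult_0_r in H.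
  assert (H1 := lin_pos s Hs). assert (H2 := quad_pos s). nra.
Qed.

(* Partial fractions of [kernel (uval t) s = 27 t^3 (1 - s)^2 / (lin s * quad s)]. *)
Let primitive (s : R) : R :=
  - (1 - t + t ^ 2) / (3 * (1 + t + t ^ 2)) * ln (lin s)
  - (1 + t) ^ 2 / (3 * (1 + t + t ^ 2)) * ln (quad s)
  + 2 * t * (1 + t) / (sqrt 3 * ((1 + t + t ^ 2) * (1 - t))) * atan ((3 * t * s + b / 2) / K).

Let is_derive_primitive (s : R) : 0 <= s <= 1 -> is_derive primitive s (kernel (uval t) s).
Proof.
  intros Hs.
  assert (Hlin := lin_pos s Hs). assert (Hquad := quad_pos s).
  assert (Hsqrt := Rlt_sqrt3_0). assert (Hcube := one_plus_cube_pos t ltac:(lra)).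
  assert (HK : K <> 0) by (unfold K; apply Rmult_integral_contrapositive; split; nra).
  assert (Dlog : is_derive (fun s => - (1 - t + t ^ 2) / (3 * (1 + t + t ^ 2)) * ln (lin s)
                                   - (1 + t) ^ 2 / (3 * (1 + t + t ^ 2)) * ln (quad s)) s
      (- (1 - t + t ^ 2) / (3 * (1 + t + t ^ 2)) * (- (3 * t) / lin s)
       - (1 + t) ^ 2 / (3 * (1 + t + t ^ 2))
         * ((2 * (3 * t * s) * (3 * t) + b * (3 * t)) / quad s))).
  { unfold lin, quad in Hlin, Hquad |- *. auto_derive; [repeat split; lra|].
    field. repeat split; nra. }
  assert (Datan := is_derive_atan_div (fun s => 3 * t * s + b / 2) (fun _ => K) s (3 * t) 0
                     ltac:(auto_derive; [auto | ring]) ltac:(auto_derive; [auto | ring]) HK).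
  evar_last; [exact (is_derive_plus _ _ _ _ _ Dlog (is_derive_scal _ _ _ _ Datan))|].
  cbv beta. change (plus ?x ?y) with (x + y).
  replace (K ^ 2 + (3 * t * s + b / 2) ^ 2) with (quad s)
    by (unfold K, quad, b; rewrite sqrt3_mul_pow2; field).
  unfold kernel.
  replace (1 - uval t * s * (1 - s) ^ 2) with (lin s * quad s / (1 + t ^ 3) ^ 2)
    by (rewrite <- kernel_uval_denominator; field; lra).
  unfold uval, lin, quad, K, b in *. field. repeat split; nra.
Qed.

Let primitive_endpoints : primitive 1 - primitive 0 = kernel_integral t.
Proof.
  assert (Hsqrt := Rlt_sqrt3_0).
  assert (Hm : 0 < 1 - t + t ^ 2) by nra.
  assert (Hp : 0 < (1 + t) ^ 2) by (apply pow2_gt_0; lra).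
  unfold primitive, lin, quad.
  replace ((1 + t) ^ 2 - 3 * t * 1) with (1 - t + t ^ 2) by ring.
  replace ((1 + t) ^ 2 - 3 * t * 0) with ((1 + t) ^ 2) by ring.
  replace ((3 * t * 1) ^ 2 + b * (3 * t * 1) + (1 - t + t ^ 2) ^ 2)
    with ((1 + t) ^ 2 * (1 - t + t ^ 2)) by (unfold b; ring).
  replace ((3 * t * 0) ^ 2 + b * (3 * t * 0) + (1 - t + t ^ 2) ^ 2)
    with ((1 - t + t ^ 2) * (1 - t + t ^ 2)) by ring.
  replace ((3 * t * 1 + b / 2) / K) with ((1 + t) / (sqrt 3 * (1 - t)))
    by (unfold b, K; field; split; nra).
  replace ((3 * t * 0 + b / 2) / K) with ((t ^ 2 - 4 * t + 1) / (sqrt 3 * (1 - t ^ 2)))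
    by (unfold b, K; field; split; nra).
  rewrite !ln_mult by lra.
  assert (Hatan := atan_triple_identity t t_range).
  replace (atan ((t ^ 2 - 4 * t + 1) / (sqrt 3 * (1 - t ^ 2))))
    with (atan ((1 + t) / (sqrt 3 * (1 - t))) - 3 * atan_part t) by lra.
  unfold kernel_integral, log_part. rewrite ln_div by lra.
  replace (2 * t * (1 + t) / (sqrt 3 * ((1 + t + t ^ 2) * (1 - t))))
    with (2 * sqrt 3 / 3 * (t * (1 + t) / ((1 + t + t ^ 2) * (1 - t)))).
  2: { field_simplify_eq; [|split; nra]. rewrite pow2_sqrt; lra. }
  field. split; nra.
Qed.

Lemma is_RInt_kernel_uval : is_RInt (kernel (uval t)) 0 1 (kernel_integral t).
Proof.
  rewrite <- primitive_endpoints.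
  apply is_RInt_derive_R; [lra | apply is_derive_primitive |].
  intros s Hs. assert (Hden := kernel_uval_denominator_neq_0 s Hs).
  apply ex_derive_continuous_R. unfold kernel. auto_derive.
  contradict Hden. rewrite <- Hden. simpl. ring.
Qed.

End Kernel_integral.

(** * The differential equation *)

Definition closed_form (t : R) : R := 6 * atan_part t ^ 2 - 1 / 2 * log_part t ^ 2.

Lemma is_derive_log_part (t : R) : -1 < t ->
  is_derive log_part t (- 3 * (1 - t) / (1 + t ^ 3)).
Proof.
  intros Ht. assert (H := one_plus_cube_pos t Ht). unfold log_part. auto_derive.
  - split; [nra|]. split; [|auto].
    apply Rmult_lt_0_compat; [nra | apply Rinv_0_lt_compat; nra].
  - field. repeat split; nra.
Qed.

Lemma is_derive_uval (t : R) : -1 < t ->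
  is_derive uval t (81 * t ^ 2 * (1 - t ^ 3) / (1 + t ^ 3) ^ 3).
Proof.
  intros Ht. assert (H := one_plus_cube_pos t Ht). unfold uval. auto_derive.
  - nra.
  - field. nra.
Qed.

Lemma is_derive_closed_form (t : R) : -1 < t < 2 ->
  is_derive closed_form t
    (12 * atan_part t * (sqrt 3 / (2 * (1 - t + t ^ 2))) + 3 * (1 - t) / (1 + t ^ 3) * log_part t).
Proof.
  intros Ht. evar_last.
  - exact (is_derive_minus _ _ _ _ _
             (is_derive_scal _ _ 6 _ (is_derive_pow _ 2 _ _ (is_derive_atan_part t ltac:(lra))))
             (is_derive_scal _ _ (1 / 2) _
                (is_derive_pow _ 2 _ _ (is_derive_log_part t ltac:(lra))))).
  - unfold minus, plus, opp; simpl. field. assert (H := one_plus_cube_pos t ltac:(lra)). nra.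
Qed.

Lemma uval_mul_PSeries_derive (t : R) : -1 < t < 1 -> Rabs (uval t) < coef_radius ->
  uval t * PSeries (PS_derive coef) (uval t) = kernel_integral t.
Proof.
  intros Ht Hu.
  assert (Hseries := is_series_coef_kernel _ _ Hu (is_RInt_kernel_uval t Ht)).
  unfold PSeries. rewrite <- Series_scal_l.
  apply is_series_unique. eapply is_series_ext; [|exact Hseries].
  intros n. unfold PS_derive. simpl. ring.
Qed.

(* The differential equation [u F'(u) = kernel_integral t] at [u = uval t] is exactly
   [d/dt F (uval t) = d/dt closed_form t]. *)
Lemma is_derive_PSeries_uval_minus_closed_form (t : R) :
  -1 < t < 1 -> t <> 0 -> Rabs (uval t) < coef_radius ->
  is_derive (fun z => PSeries coef (clamp coef_radius (uval z)) - closed_form z) t 0.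
Proof.
  intros Ht Ht0 Hu.
  assert (HF := is_derive_PSeries_clamp coef coef_radius ltac:(unfold coef_radius; lra)
                  ex_series_coef_radius _ Hu).
  evar_last.
  - exact (is_derive_minus _ _ _ _ _
             (is_derive_comp _ uval t _ _ HF (is_derive_uval t ltac:(lra)))
             (is_derive_closed_form t ltac:(lra))).
  - assert (Huval : uval t <> 0).
    { unfold uval. assert (t ^ 3 <> 0) by (apply pow_nonzero; exact Ht0).
      assert (Hcube := one_plus_cube_pos t ltac:(lra)).
      apply Rmult_integral_contrapositive. split; [lra|].
      apply Rinv_neq_0_compat, pow_nonzero. lra. }
    replace (PSeries (PS_derive coef) (uval t)) with (kernel_integral t / uval t)
      by (rewrite <- (uval_mul_PSeries_derive t Ht Hu); field; exact Huval).
    assert (H := one_plus_cube_pos t ltac:(lra)).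
    assert (t ^ 3 <> 0) by (apply pow_nonzero; exact Ht0).
    assert (1 - t ^ 3 <> 0) by nra.
    unfold minus, plus, opp, scal; simpl; unfold mult; simpl.
    unfold kernel_integral, uval. field. repeat split; nra.
Qed.

Definition admissible (t : R) : Prop := -1 < t <= 1 /\ 4 * Rabs (t ^ 3) <= (1 + t ^ 3) ^ 2.

Lemma Rabs_uval (t : R) : -1 < t -> Rabs (uval t) = 27 * Rabs (t ^ 3) / (1 + t ^ 3) ^ 2.
Proof.
  intros Ht. unfold uval, Rdiv.
  rewrite !Rabs_mult, Rabs_inv, (Rabs_right 27), (Rabs_right ((1 + t ^ 3) ^ 2));
    [reflexivity | | lra].
  apply Rle_ge, pow2_ge_0.
Qed.

Lemma Rabs_uval_le (t : R) : admissible t -> Rabs (uval t) <= coef_radius.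
Proof.
  intros [Ht Hw]. rewrite Rabs_uval by lra. unfold coef_radius.
  assert (Hpos := one_plus_cube_pos t ltac:(lra)).
  assert (0 < (1 + t ^ 3) ^ 2) by (apply pow2_gt_0; lra).
  apply Rmult_le_reg_r with ((1 + t ^ 3) ^ 2); [lra|].
  replace (27 * Rabs (t ^ 3) / (1 + t ^ 3) ^ 2 * (1 + t ^ 3) ^ 2) with (27 * Rabs (t ^ 3))
    by (field; lra).
  lra.
Qed.

Lemma Rabs_uval_lt (t : R) : -1 < t -> 4 * Rabs (t ^ 3) < (1 + t ^ 3) ^ 2 ->
  Rabs (uval t) < coef_radius.
Proof.
  intros Ht Hw. rewrite Rabs_uval by lra. unfold coef_radius.
  assert (Hpos := one_plus_cube_pos t ltac:(lra)).
  assert (0 < (1 + t ^ 3) ^ 2) by (apply pow2_gt_0; lra).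
  apply Rmult_lt_reg_r with ((1 + t ^ 3) ^ 2); [lra|].
  replace (27 * Rabs (t ^ 3) / (1 + t ^ 3) ^ 2 * (1 + t ^ 3) ^ 2) with (27 * Rabs (t ^ 3))
    by (field; lra).
  lra.
Qed.

(* On the segment strictly between [0] and an admissible [t] the bound is strict:
   for [y > 0] as [y^3 < 1], and for [y < 0] because [w^2 + 6 w + 1] increases on [w > -3]. *)
Lemma admissible_between_strict (t y : R) : admissible t -> (0 < y < t \/ t < y < 0) ->
  4 * Rabs (y ^ 3) < (1 + y ^ 3) ^ 2.
Proof.
  intros [Ht Hw] [Hy | Hy].
  - assert (0 < y ^ 3 < 1).
    { replace (y ^ 3) with (y * y * y) by ring.
      split; [apply Rmult_lt_0_compat; [apply Rmult_lt_0_compat|] |]; nra. }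
    rewrite Rabs_right by lra. assert (0 < (1 - y ^ 3) ^ 2) by (apply pow2_gt_0; lra). nra.
  - assert (Hcube : t ^ 3 < y ^ 3 < 0).
    { replace (y ^ 3) with (- ((- y) * (- y) * (- y))) by ring.
      replace (t ^ 3) with (- ((- t) * (- t) * (- t))) by ring.
      split; [|assert (0 < (- y) * (- y) * (- y)) by (apply Rmult_lt_0_compat;
                 [apply Rmult_lt_0_compat|]; lra); lra].
      apply Ropp_lt_contravar. apply Rmult_le_0_lt_compat; try nra. }
    assert (-1 < t ^ 3) by (assert (H := one_plus_cube_pos t ltac:(lra)); lra).
    rewrite Rabs_left in Hw by lra. rewrite Rabs_left by lra.
    assert (0 < (y ^ 3 - t ^ 3) * (y ^ 3 + t ^ 3 + 6)) by (apply Rmult_lt_0_compat; lra).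
    nra.
Qed.

Lemma uval_0 : uval 0 = 0.
Proof. unfold uval. field. Qed.

Lemma closed_form_0 : closed_form 0 = 0.
Proof.
  unfold closed_form, log_part. rewrite atan_part_0.
  replace ((1 - 0 + 0 ^ 2) / (1 + 0) ^ 2) with 1 by field. rewrite ln_1. ring.
Qed.

Lemma PSeries_coef_uval (t : R) : admissible t -> PSeries coef (uval t) = closed_form t.
Proof.
  intros Ht.
  set (phi := fun z => PSeries coef (clamp coef_radius (uval z)) - closed_form z).
  assert (Hphi0 : phi 0 = 0).
  { unfold phi.
    rewrite uval_0, clamp_id, PSeries_0, closed_form_0
      by (rewrite Rabs_R0; unfold coef_radius; lra).
    simpl. ring. }
  assert (Hphi : phi t = phi 0).
  { destruct (Req_dec t 0) as [-> | Ht0]; [reflexivity|].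
    destruct Ht as [Ht Hw].
    apply eq_of_is_derive_0.
    - intros y Hy.
      assert (Hy' : 0 < y < t \/ t < y < 0)
        by (revert Hy; unfold Rmin, Rmax; destruct Rle_dec; lra).
      apply is_derive_PSeries_uval_minus_closed_form; [lra | lra |].
      apply Rabs_uval_lt; [lra|]. apply (admissible_between_strict t); [split |]; assumption.
    - intros y Hy.
      assert (Hy' : -1 < y <= 1) by (revert Hy; unfold Rmin, Rmax; destruct Rle_dec; lra).
      apply continuity_pt_minus.
      + apply (continuity_pt_comp uval (fun v => PSeries coef (clamp coef_radius v))).
        * exact (continuity_pt_of_is_derive _ _ _ (is_derive_uval y ltac:(lra))).
        * apply continuity_PSeries_clamp; [unfold coef_radius; lra | exact ex_series_coef_radius].
      + exact (continuity_pt_of_is_derive _ _ _ (is_derive_closed_form y ltac:(lra))). }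
  rewrite Hphi0 in Hphi. unfold phi in Hphi.
  rewrite clamp_id in Hphi by (apply Rabs_uval_le, Ht). lra.
Qed.

Lemma is_series_PSeries_coef_succ (v : R) : Rabs v <= coef_radius ->
  is_series (fun n => coef (S n) * v ^ S n) (PSeries coef v).
Proof.
  intros Hv. apply (is_series_incr_1 (fun n => coef n * v ^ n)).
  change (is_series (fun n => coef n * v ^ n) (PSeries coef v + coef 0 * v ^ 0)).
  replace (PSeries coef v + coef 0 * v ^ 0) with (PSeries coef v) by (simpl; ring).
  apply Series_correct, (ex_series_closed_disk coef coef_radius ex_series_coef_radius _ Hv).
Qed.

(** * Back to [x] and [y] *)

Lemma cbrt_pow3 (z : R) : cbrt z ^ 3 = z.
Proof.
  assert (Hthird : forall w, 0 < w -> Rpower w (1 / 3) ^ 3 = w).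
  { intros w Hw. rewrite <- Rpower_pow by apply exp_pos. rewrite Rpower_mult.
    replace (1 / 3 * INR 3) with 1 by (simpl; field). apply Rpower_1, Hw. }
  unfold cbrt. destruct (Rlt_dec 0 z) as [Hz | Hz]; [apply Hthird, Hz|].
  destruct (Rlt_dec z 0) as [Hz' | Hz']; [|simpl; lra].
  replace ((- Rpower (- z) (1 / 3)) ^ 3) with (- (Rpower (- z) (1 / 3) ^ 3)) by ring.
  rewrite Hthird; lra.
Qed.

Lemma cbrt_neq_0 (z : R) : z <> 0 -> cbrt z <> 0.
Proof. intros Hz E. apply Hz. rewrite <- (cbrt_pow3 z), E. ring. Qed.

Lemma pow3_bounds (t : R) : -1 < t ^ 3 <= 1 -> -1 < t <= 1.
Proof.
  intros Ht3. split.
  - destruct (Rle_lt_dec t (-1)); [|assumption].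
    assert (t ^ 3 <= -1) by (replace (t ^ 3) with (t * (t * t)) by ring; nra). lra.
  - destruct (Rle_lt_dec t 1); [assumption|].
    assert (1 < t ^ 3) by (replace (t ^ 3) with (t * (t * t)) by ring; nra). lra.
Qed.

(* [- (sqrt 2 + 1)^2 = - (3 + 2 sqrt 2)] is the inverse of [2 sqrt 2 - 3], the larger root
   of [w^2 + 6 w + 1 = (1 + w)^2 + 4 w]. *)
Lemma inv_ratio_condition (z : R) : z >= 1 \/ z <= - (sqrt 2 + 1) ^ 2 ->
  -1 < / z <= 1 /\ 4 * Rabs (/ z) <= (1 + / z) ^ 2.
Proof.
  assert (Hs := sqrt_pos 2). assert (Hs2 : sqrt 2 * sqrt 2 = 2) by (apply sqrt_sqrt; lra).
  intros [Hz | Hz].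
  - assert (Hw : 0 < / z <= 1).
    { split; [apply Rinv_0_lt_compat; lra|]. rewrite <- Rinv_1. apply Rinv_le_contravar; lra. }
    rewrite Rabs_right by lra. split; [lra|].
    assert (0 <= (1 - / z) ^ 2) by apply pow2_ge_0. nra.
  - replace ((sqrt 2 + 1) ^ 2) with (3 + 2 * sqrt 2) in Hz by (simpl; nra).
    assert (Hinv : / z * z = 1) by (field; nra).
    assert (Hw : 2 * sqrt 2 - 3 <= / z < 0).
    { assert (/ z < 0) by (apply Rinv_lt_0_compat; nra). split; [|lra].
      assert ((2 * sqrt 2 - 3) * (3 + 2 * sqrt 2) = -1) by nra. nra. }
    assert (1 < sqrt 2 < 3 / 2) by (split; nra).
    rewrite Rabs_left by lra. split; [lra|].
    assert (2 * sqrt 2 <= / z + 3) by lra. nra.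
Qed.

Lemma ratio_condition_neq_0 (x y : R) :
  x / y >= 1 \/ x / y <= - (sqrt 2 + 1) ^ 2 -> x <> 0.
Proof.
  intros Hxy ->. unfold Rdiv in Hxy. rewrite Rmult_0_l in Hxy.
  assert (0 < (sqrt 2 + 1) ^ 2) by (apply pow2_gt_0; assert (H := sqrt_pos 2); lra). lra.
Qed.

Lemma admissible_cbrt_ratio (x y : R) : y <> 0 ->
  x / y >= 1 \/ x / y <= - (sqrt 2 + 1) ^ 2 -> admissible (cbrt y / cbrt x).
Proof.
  intros Hy Hxy. assert (Hx := ratio_condition_neq_0 x y Hxy).
  assert (Hcube : (cbrt y / cbrt x) ^ 3 = / (x / y)).
  { assert (Hx' := cbrt_neq_0 x Hx).
    unfold Rdiv. rewrite Rpow_mult_distr, pow_inv. rewrite !cbrt_pow3. field. split; assumption. }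
  destruct (inv_ratio_condition (x / y) Hxy) as [Hw Hbound].
  rewrite <- Hcube in Hw, Hbound. split; [apply pow3_bounds, Hw | exact Hbound].
Qed.

Section Cube_root_ratio.

Variables x y : R.
Hypothesis x_neq_0 : x <> 0.
Hypothesis ratio_admissible : admissible (cbrt y / cbrt x).

Let a : R := cbrt x.
Let b : R := cbrt y.
Let t : R := b / a.

Let a_neq_0 : a <> 0. Proof. exact (cbrt_neq_0 x x_neq_0). Qed.
Let t_range : -1 < t <= 1. Proof. exact (proj1 ratio_admissible). Qed.
Let x_eq : x = a ^ 3. Proof. symmetry. apply cbrt_pow3. Qed.
Let y_eq : y = (t * a) ^ 3.
Proof.
  unfold t. replace (b / a * a) with b by (field; exact a_neq_0).
  symmetry. apply cbrt_pow3.
Qed.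

Lemma cbrt_ratio_sum_neq_0 : x + y <> 0.
Proof.
  assert (H := t_range). assert (Hcube := one_plus_cube_pos t ltac:(lra)).
  rewrite x_eq, y_eq. replace (a ^ 3 + (t * a) ^ 3) with (a ^ 3 * (1 + t ^ 3)) by ring.
  apply Rmult_integral_contrapositive. split; [apply pow_nonzero, a_neq_0 | lra].
Qed.

Lemma uval_cbrt_ratio : uval (cbrt y / cbrt x) = 27 * x * y / (x + y) ^ 2.
Proof.
  assert (H := t_range). assert (Hcube := one_plus_cube_pos t ltac:(lra)).
  assert (Hsum := cbrt_ratio_sum_neq_0). rewrite x_eq, y_eq in Hsum.
  fold a b t. unfold uval. rewrite x_eq, y_eq. field. split; [exact Hsum | lra].
Qed.

Lemma closed_form_cbrt_ratio : closed_form (cbrt y / cbrt x) =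
  6 * atan (sqrt 3 * cbrt y / (2 * cbrt x - cbrt y)) ^ 2
  - 1 / 2 * ln ((x + y) / (cbrt x + cbrt y) ^ 3) ^ 2.
Proof.
  assert (Ht := t_range). assert (Ha := a_neq_0).
  fold a b t. unfold closed_form, atan_part, log_part.
  replace (b) with (t * a) by (unfold t; field; exact Ha).
  assert (Hd : 2 * a - t * a <> 0).
  { replace (2 * a - t * a) with (a * (2 - t)) by ring.
    apply Rmult_integral_contrapositive. split; [exact Ha | lra]. }
  replace (sqrt 3 * (t * a) / (2 * a - t * a)) with (sqrt 3 * t / (2 - t))
    by (field; split; [exact Hd | lra]).
  replace ((x + y) / (a + t * a) ^ 3) with ((1 - t + t ^ 2) / (1 + t) ^ 2).
  { reflexivity. }
  rewrite x_eq, y_eq. field. split; [|lra].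
  replace (a + t * a) with (a * (1 + t)) by ring.
  apply Rmult_integral_contrapositive. split; [exact Ha | lra].
Qed.

End Cube_root_ratio.

Lemma series_term_succ (x y : R) (k : nat) : x + y <> 0 ->
  series_term x y (S k) = coef (S k) * (27 * x * y / (x + y) ^ 2) ^ S k.
Proof.
  intros Hxy. unfold series_term, coef.
  assert (HC := Binomial_C_pos (3 * S k) (S k)).
  assert (Hk : INR (S k) <> 0) by (apply not_0_INR; lia).
  assert (Hpow := pow_nonzero (x + y) (2 * S k) Hxy).
  unfold Rdiv. rewrite (Rpow_mult_distr (27 * x * y) (/ (x + y) ^ 2)), pow_inv, <- pow_mult.
  field. repeat split; auto; lra.
Qed.

Theorem mainTheorem1 (x y : R) (hy : y <> 0)
  (hxy : x / y >= 1 \/ x / y <= - (sqrt 2 + 1) ^ 2) :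
  is_series (fun n : nat => series_term x y (S n))
    (6 * (atan (sqrt 3 * cbrt y / (2 * cbrt x - cbrt y))) ^ 2
     - 1 / 2 * (ln ((x + y) / (cbrt x + cbrt y) ^ 3)) ^ 2).
Proof.
  assert (Hx := ratio_condition_neq_0 x y hxy).
  assert (Ht := admissible_cbrt_ratio x y hy hxy).
  rewrite <- (closed_form_cbrt_ratio x y Hx Ht), <- PSeries_coef_uval by exact Ht.
  apply (is_series_ext (fun n => coef (S n) * uval (cbrt y / cbrt x) ^ S n)).
  { intros n. rewrite (uval_cbrt_ratio x y Hx Ht).
    symmetry. apply series_term_succ, (cbrt_ratio_sum_neq_0 x y Hx Ht). }
  apply is_series_PSeries_coef_succ, Rabs_uval_le, Ht.
Qed.
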